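(* (List size bound.) Let $R>0$, let $L\subset\mathbb R^d$ be a finite list of candidate regressors, and let $T$ be a finite set of batches. Let $L'\subseteq L$ be a sublist such that (1) the system $\mathrm{IE}(\beta;L,T,R)$ has a solution for each $\beta\in L'$, and (2) $\|\beta_1-\beta_2\|_2\ge c\big(R+k\alpha^{-1/k}\sigma Q^{1/k}/\sqrt n\big)$ for any two distinct $\beta_1,\beta_2\in L'$, where $c$ is the constant appearing in $\mathrm{IE}$. Then $|L'|\le O(1/\alpha)$.
   Context: Parameters $\alpha\in(0,1/2)$, $k,n\in\mathbb Z_+$, $\sigma>0$, $Q\ge1$ are fixed; each batch $B\in T$ is a finite multiset of pairs $(X,y)\in\mathbb R^d\times\mathbb R$. For $\beta\in L$, $\mathrm{IE}(\beta;L,T,R)$ is the following system of linear inequalities in the variables $\mathcal W:T\to[0,1]$: (i) $\sum_{B\in T}\mathcal W(B)\ge0.9\alpha|T|$; (ii) for every $\beta'\in L$ with $\|\beta'-\beta\|_2\ge c(R+k\alpha^{-1/k}\sigma Q^{1/k}/\sqrt n)$, where $c$ is a sufficiently large absolute constant, $\sum_{B\in T}\mathbb 1\{\sum_{(X,y)\in B}(y-X^\top\beta)^2\le\sum_{(X,y)\in B}(y-X^\top\beta')^2\}\,\mathcal W(B)\le\frac{\alpha}{20}\sum_{B\in T}\mathcal W(B)$. *)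

From HB Require Import structures.
From mathcomp Require Import all_boot all_order all_algebra.
From mathcomp Require Import all_classical all_reals all_analysis.
Set Implicit Arguments. Unset Strict Implicit. Unset Printing Implicit Defensive.
Import Order.TTheory GRing.Theory Num.Theory.
Local Open Scope ring_scope.

Definition norm2 {R : realType} {d : nat} (v : 'cV[R]_d) : R :=
  Num.sqrt (\sum_(i < d) v i 0 ^+ 2).

Definition dotv {R : realType} {d : nat} (X b : 'cV[R]_d) : R :=
  \sum_(i < d) X i 0 * b i 0.

(* A batch is a finite multiset of pairs (X, y), represented as a seq. *)
Definition batch_t (R : realType) (d : nat) := seq ('cV[R]_d * R).

Definition bloss {R : realType} {d : nat} (B : batch_t R d) (b : 'cV[R]_d) : R :=
  \sum_(p <- B) (p.2 - dotv p.1 b) ^+ 2.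

Definition ie_thr {R : realType} (c alpha sigma Q Rr : R) (k n : nat) : R :=
  c * (Rr + k%:R * powR alpha (- (k%:R)^-1) * sigma * powR Q ((k%:R)^-1)
            / Num.sqrt n%:R).

(* W : T -> [0,1] is a solution of IE(beta; L, T, R); the batches of T are
   indexed by a finite type T via [batch]. *)
Definition IE_sol {R : realType} {d : nat} (c alpha sigma Q Rr : R) (k n : nat)
    (T : finType) (batch : T -> batch_t R d) (L : seq 'cV[R]_d)
    (beta : 'cV[R]_d) (W : T -> R) : Prop :=
  [/\ (forall B, 0 <= W B <= 1),
      \sum_(B : T) W B >= 9 / 10 * alpha * #|T|%:R &
      forall beta', beta' \in L ->
        norm2 (beta' - beta) >= ie_thr c alpha sigma Q Rr k n ->
        \sum_(B : T) (if bloss (batch B) beta <= bloss (batch B) beta'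
                      then W B else 0)
          <= alpha / 20 * \sum_(B : T) W B].

From mathcomp Require Import all_boot all_order all_algebra.
From mathcomp Require Import all_classical all_reals all_analysis.
From mathcomp Require Import ring lra.
Set Implicit Arguments. Unset Strict Implicit. Unset Printing Implicit Defensive.
Import Order.TTheory GRing.Theory Num.Theory.
Local Open Scope ring_scope.

(* Choose an IE weighting w_i of the batches for every candidate beta_i of L'
   and count  wins = sum_B sum_(i,j) [loss_B(beta_i) <= loss_B(beta_j)] w_i(B).
   By separation, the IE constraint of beta_i bounds each off-diagonal pair by
   alpha/20 times the mass of w_i, so wins <= (1 + m alpha/20) S, where the
   total mass S is at least 0.9 m alpha |T|.  Conversely, in each batch the
   losses totally order the candidates, so each pair is counted at least once
   and (as w_j <= 1) wins >= sum_B s(B)^2 / 2 with s(B) = sum_i w_i(B); by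
   Cauchy-Schwarz this is at least S^2 / (2 |T|).  Comparing the two bounds,
   0.45 m alpha <= S / (2 |T|) <= 1 + m alpha / 20, i.e. m alpha <= 5/2. *)

Lemma sqr_sum_eq_sum_mul (R : comPzRingType) (T : finType) (f : T -> R) :
  (\sum_x f x) ^+ 2 = \sum_x \sum_y f x * f y.
Proof. by rewrite expr2 mulr_suml; under eq_bigr do rewrite mulr_sumr. Qed.

Lemma sqr_sum_le_card_mul_sum_sqr (R : realFieldType) (T : finType)
    (f : T -> R) :
  (\sum_x f x) ^+ 2 <= #|T|%:R * \sum_x f x ^+ 2.
Proof.
have : 0 <= \sum_x \sum_y (f x ^+ 2 + f y ^+ 2 - 2 * (f x * f y)).
  apply: sumr_ge0 => x _; apply: sumr_ge0 => y _.
  have -> : f x ^+ 2 + f y ^+ 2 - 2 * (f x * f y) = (f x - f y) ^+ 2 by ring.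
  exact: sqr_ge0.
under eq_bigr do rewrite sumrB big_split /= sumr_const -mulr_sumr.
rewrite sumrB big_split /= sumrMnl sumr_const -mulr_sumr.
rewrite -sqr_sum_eq_sum_mul mulr_natl; lra.
Qed.

Lemma sqr_sum_le_total_pairs (R : realFieldType) (I : finType) (r : rel I)
    (w : I -> R) :
  (forall i j, r i j || r j i) -> (forall i, 0 <= w i) ->
  (\sum_i w i) ^+ 2 <= 2 * \sum_i \sum_j (if r i j then w i * w j else 0).
Proof.
move=> r_total w_ge0.
rewrite sqr_sum_eq_sum_mul mulr2n mulrDl mul1r [X in _ <= _ + X]exchange_big /=.
rewrite -big_split /=; apply: ler_sum => i _.
rewrite -big_split /=; apply: ler_sum => j _.
have := mulr_ge0 (w_ge0 i) (w_ge0 j); rewrite [w j * _]mulrC.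
by case/orP: (r_total i j) => ->; case: (r j i); case: (r i j); lra.
Qed.

Section WeightedTournament.

Variables (R : realFieldType) (I T : finType).
Variables (beats : T -> rel I) (w : I -> T -> R) (a eps : R).
Hypothesis beats_total : forall B i j, beats B i j || beats B j i.
Hypothesis w_ge0 : forall i B, 0 <= w i B.
Hypothesis w_le1 : forall i B, w i B <= 1.
Hypothesis eps_ge0 : 0 <= eps.
Hypothesis mass_ge : forall i, a * #|T|%:R <= \sum_B w i B.
Hypothesis beats_rare : forall i j, i != j ->
  \sum_B (if beats B i j then w i B else 0) <= eps * \sum_B w i B.

Local Notation mass i := (\sum_B w i B).
Local Notation load B := (\sum_i w i B).
Local Notation wins :=
  (\sum_i \sum_j \sum_B (if beats B i j then w i B else 0)).

Lemma wins_le_mass : wins <= (1 + #|I|%:R * eps) * \sum_i mass i.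
Proof.
rewrite mulr_sumr; apply: ler_sum => i _.
have mass_ge0 : 0 <= mass i by apply: sumr_ge0.
apply: (@le_trans _ _ (\sum_j ((if j == i then mass i else 0) + eps * mass i))).
  apply: ler_sum => j _; case: eqVneq => [->|ji]; last first.
    by rewrite add0r; apply: beats_rare; rewrite eq_sym.
  apply: (@le_trans _ _ (mass i)); last by rewrite lerDl mulr_ge0.
  by apply: ler_sum => B _; case: ifP.
rewrite big_split /= -big_mkcond big_pred1_eq sumr_const.
rewrite -[_ *+ _]mulr_natr; lra.
Qed.

Lemma sum_sqr_load_le_wins : \sum_B load B ^+ 2 <= 2 * wins.
Proof.
under [wins]eq_bigr do rewrite exchange_big.
rewrite exchange_big mulr_sumr; apply: ler_sum => B _.
apply: le_trans (sqr_sum_le_total_pairs (beats_total B) (w_ge0^~ B)) _.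
rewrite ler_pM2l // ler_sum // => i _; rewrite ler_sum // => j _.
by case: ifP; rewrite // ler_piMr.
Qed.

Lemma sqr_mass_le_mass :
  (\sum_i mass i) ^+ 2 <= 2 * #|T|%:R * (1 + #|I|%:R * eps) * \sum_i mass i.
Proof.
rewrite [X in X ^+ 2]exchange_big /=.
apply: le_trans (sqr_sum_le_card_mul_sum_sqr _) _.
rewrite [2 * _]mulrC -!mulrA ler_wpM2l //.
apply: le_trans sum_sqr_load_le_wins _.
by rewrite ler_wpM2l // wins_le_mass.
Qed.

Lemma card_mul_le_of_weighted_tournament :
  (0 < #|T|)%N -> #|I|%:R * (a - 2 * eps) <= 2.
Proof.
move=> T_gt0; have N_gt0 : 0 < #|T|%:R :> R by rewrite ltr0n.
have := sqr_mass_le_mass; set S := \sum_i mass i => S_sqr_le.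
have S_ge : #|I|%:R * (a * #|T|%:R) <= S.
  apply: le_trans (ler_sum _ (fun i _ => mass_ge i)).
  by rewrite sumr_const mulr_natl.
have S_ge0 : 0 <= S by apply: sumr_ge0 => i _; apply: sumr_ge0.
have m_eps_ge0 : 0 <= #|I|%:R * eps by rewrite mulr_ge0.
suff : #|T|%:R * (#|I|%:R * a) <= #|T|%:R * (2 + 2 * (#|I|%:R * eps)).
  by rewrite ler_pM2l //; lra.
have [S_gt0|S_le0] := ltP 0 S.
  by move: S_sqr_le; rewrite expr2 ler_pM2r // => S_le; lra.
have := mulr_ge0 (ltW N_gt0) m_eps_ge0; lra.
Qed.

End WeightedTournament.
Theorem lemma3p7 (R : realType) :
  exists C : R, 0 < C /\
  forall (d : nat) (alpha sigma Q Rr c : R) (k n : nat)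
         (T : finType) (batch : T -> batch_t R d) (L L' : seq 'cV[R]_d),
    0 < alpha -> alpha < 1 / 2 -> (0 < k)%N -> (0 < n)%N ->
    0 < sigma -> 1 <= Q -> 0 < Rr -> 0 < c ->
    (0 < #|T|)%N ->
    uniq L' -> {subset L' <= L} ->
    (forall beta, beta \in L' ->
       exists W : T -> R, IE_sol c alpha sigma Q Rr k n batch L beta W) ->
    (forall b1 b2, b1 \in L' -> b2 \in L' -> b1 != b2 ->
       norm2 (b1 - b2) >= ie_thr c alpha sigma Q Rr k n) ->
    (size L')%:R <= C / alpha.
Proof.
exists (5 / 2); split; first lra.
move=> d alpha sigma Q Rr c k n T batch L L' alpha_gt0 _ _ _ _ _ _ _ T_gt0
  uniq_L' sub_L'L IE_L' sep_L'.
pose b (i : 'I_(size L')) := nth 0 L' i.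
have b_in i : b i \in L' by exact: mem_nth.
have [W W_IE] := choice (fun i => IE_L' (b i) (b_in i)).
suff : #|'I_(size L')|%:R * (9 / 10 * alpha - 2 * (alpha / 20)) <= 2.
  by rewrite card_ord ler_pdivlMr //; lra.
apply: (@card_mul_le_of_weighted_tournament _ _ T
  (fun B i j => bloss (batch B) (b i) <= bloss (batch B) (b j)) W)
  T_gt0 => [B i j|i B|i B||i|i j ij].
- exact: le_total.
- by case: (W_IE i) => /(_ B) /andP[].
- by case: (W_IE i) => /(_ B) /andP[].
- lra.
- by case: (W_IE i).
- case: (W_IE i) => _ _; apply; first exact/sub_L'L/b_in.
  by apply: sep_L'; rewrite ?b_in // /b nth_uniq // eq_sym.
Qed.
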